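(* For any $f\in\mathcal{E}$ with $f\neq\mathrm{id}$, the index $[\mathcal{E}:C(f)]$ is uncountable, where $C(f)=\{g\in\mathcal{E}:fg=gf\}$.
   Context: Identify $\mathbb{T}^1=\mathbb{R}/\mathbb{Z}$ with $[0,1)$. An interval exchange transformation is a bijection of $\mathbb{T}^1$ that is a translation on each piece of some partition of $[0,1)$ into finitely many half-open intervals $[a,b)$; $\mathcal{E}$ is the group of these under composition. *)

From Stdlib Require Import Reals.
Open Scope R_scope.

(* The circle T^1 = R/Z identified with [0,1). *)
Definition I01 : Type := {x : R | 0 <= x < 1}.

Definition val01 (x : I01) : R := proj1_sig x.

Definition bij01 (f : I01 -> I01) : Prop :=
  exists g : I01 -> I01, (forall x, g (f x) = x) /\ (forall y, f (g y) = y).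

Definition is_IET (f : I01 -> I01) : Prop :=
  bij01 f /\
  exists (n : nat) (a t : nat -> R),
    a 0%nat = 0 /\ a n = 1 /\
    (forall i, (i < n)%nat -> a i < a (S i)) /\
    (forall (x : I01) (i : nat), (i < n)%nat ->
       a i <= val01 x < a (S i) ->
       val01 (f x) = frac_part (val01 x + t i)).

Definition in_centralizer (f g : I01 -> I01) : Prop :=
  is_IET g /\ (forall x, f (g x) = g (f x)).

(* [E : C(f)] is countable (finite or countably infinite): there is a
   sequence of elements of E meeting every left coset h C(f) of C(f) in E,
   i.e. every g in E is of the form c_n o k with k in C(f). *)
Definition countable_index_centralizer (f : I01 -> I01) : Prop :=
  exists c : nat -> (I01 -> I01),
    (forall n, is_IET (c n)) /\
    (forall g, is_IET g ->
       exists n k, in_centralizer f k /\ (forall x, g x = c n (k x))).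

(* If [E : C(f)] were countable, say E = U_n c_n C(f), then for a point x0
   moved by f the orbit of f x0 under the stabilizer of x0 in E would be
   countable: g = c_n k with k in C(f) and g x0 = x0 forces k x0 = c_n^-1 x0,
   hence g (f x0) = c_n (f (c_n^-1 x0)) depends on n only.  But rotating a
   small interval [f x0, b) that avoids x0 moves f x0 by any amount in an
   interval of reals, which cannot be enumerated. *)

From Stdlib Require Import Reals.
From Stdlib Require Import Lra Lia ProofIrrelevance Classical IndefiniteDescription.
Open Scope R_scope.

Lemma frac_part_id (r : R) : 0 <= r < 1 -> frac_part r = r.
Proof.
  intros Hr. destruct (Int_part_frac_part_spec r 0 r Hr) as [_ E].
  - simpl; ring.
  - now rewrite <- E.
Qed.

Lemma val01_inj (x y : I01) : val01 x = val01 y -> x = y.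
Proof.
  destruct x as [x hx], y as [y hy]; unfold val01; simpl; intros ->.
  f_equal; apply proof_irrelevance.
Qed.

Lemma val01_range (x : I01) : 0 <= val01 x < 1.
Proof. destruct x; simpl; auto. Qed.

Definition I01_of_R (r : R) : I01.
Proof. exists (frac_part r). destruct (base_fp r). lra. Defined.

Lemma is_IET_intro (g : I01 -> I01) (n : nat) (a t : nat -> R) :
  bij01 g -> a 0%nat = 0 -> a n = 1 ->
  (forall i, (i < n)%nat -> a i < a (S i)) ->
  (forall x i, (i < n)%nat -> a i <= val01 x < a (S i) ->
     val01 (g x) = val01 x + t i) ->
  is_IET g.
Proof.
  intros Hg Ha0 Han Hinc Ht. split; [exact Hg|].
  exists n, a, t. do 3 (split; [assumption|]).
  intros x i Hi Hx. rewrite <- (Ht x i Hi Hx).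
  symmetry; apply frac_part_id, val01_range.
Qed.

(* Cyclic rotation by [u] of the interval [al, be), the identity elsewhere. *)
Definition rotate_on (al be u x : R) : R :=
  if Rlt_dec x al then x else
  if Rlt_dec x (be - u) then x + u else
  if Rlt_dec x be then x + u - (be - al) else x.

Lemma rotate_on_cases al be u x :
  (x < al /\ rotate_on al be u x = x) \/
  (al <= x < be - u /\ rotate_on al be u x = x + u) \/
  (be - u <= x < be /\ al <= x /\ rotate_on al be u x = x + u - (be - al)) \/
  (be <= x /\ al <= x /\ rotate_on al be u x = x).
Proof.
  unfold rotate_on.
  destruct (Rlt_dec x al); [left; split; auto|].
  destruct (Rlt_dec x (be - u)); [right; left; split; [lra|auto]|].
  destruct (Rlt_dec x be); [right; right; left; repeat split; lra|].
  right; right; right; repeat split; lra.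
Qed.

Definition interval_rotation (al be u : R) (x : I01) : I01 :=
  I01_of_R (rotate_on al be u (val01 x)).

Section IntervalRotation.

Variables al be u : R.
Hypothesis al_ge0 : 0 <= al.
Hypothesis be_le1 : be <= 1.
Hypothesis u_range : 0 < u < be - al.

Lemma val_interval_rotation x :
  val01 (interval_rotation al be u x) = rotate_on al be u (val01 x).
Proof.
  unfold interval_rotation, I01_of_R, val01 at 1; simpl. apply frac_part_id.
  pose proof (val01_range x).
  destruct (rotate_on_cases al be u (val01 x))
    as [[A E]|[[A E]|[[A [B E]]|[A [B E]]]]]; rewrite E; lra.
Qed.

Lemma interval_rotation_fix x :
  val01 x < al \/ be <= val01 x -> interval_rotation al be u x = x.
Proof.
  intros Hx. apply val01_inj. rewrite val_interval_rotation.
  destruct (rotate_on_cases al be u (val01 x))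
    as [[A E]|[[A E]|[[A [B E]]|[A [B E]]]]]; lra.
Qed.

Lemma val_interval_rotation_shift x :
  al <= val01 x < be - u -> val01 (interval_rotation al be u x) = val01 x + u.
Proof.
  intros Hx. rewrite val_interval_rotation.
  destruct (rotate_on_cases al be u (val01 x))
    as [[A E]|[[A E]|[[A [B E]]|[A [B E]]]]]; lra.
Qed.

End IntervalRotation.

Lemma interval_rotationK al be u x : 0 <= al -> be <= 1 -> 0 < u < be - al ->
  interval_rotation al be (be - al - u) (interval_rotation al be u x) = x.
Proof.
  intros H1 H2 H3. apply val01_inj.
  rewrite !val_interval_rotation by lra.
  pose proof (val01_range x).
  destruct (rotate_on_cases al be u (val01 x))
    as [[A E]|[[A E]|[[A [B E]]|[A [B E]]]]];
  destruct (rotate_on_cases al be (be - al - u) (rotate_on al be u (val01 x)))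
    as [[A' E']|[[A' E']|[[A' [B' E']]|[A' [B' E']]]]]; lra.
Qed.

Lemma bij01_interval_rotation al be u : 0 <= al -> be <= 1 -> 0 < u < be - al ->
  bij01 (interval_rotation al be u).
Proof.
  intros H1 H2 H3. exists (interval_rotation al be (be - al - u)).
  split; intros x; [now apply interval_rotationK|].
  pose proof (interval_rotationK al be (be - al - u) x H1 H2 ltac:(lra)) as E.
  now replace (be - al - (be - al - u)) with u in E by ring.
Qed.

(* The breakpoints 0 < al < be - u < be < 1 must be strict, hence the
   hypotheses [0 < al] and [be < 1]. *)
Lemma is_IET_interval_rotation al be u : 0 < al -> be < 1 -> 0 < u < be - al ->
  is_IET (interval_rotation al be u).
Proof.
  intros H1 H2 H3.
  apply (is_IET_intro _ 4
    (fun i => match i with 0%nat => 0 | 1%nat => al | 2%nat => be - u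
                         | 3%nat => be | _ => 1 end)
    (fun i => match i with 1%nat => u | 2%nat => u - (be - al) | _ => 0 end)).
  - apply bij01_interval_rotation; lra.
  - reflexivity.
  - reflexivity.
  - intros [|[|[|[|i]]]] Hi; simpl; lra || lia.
  - intros x i Hi Hx. rewrite val_interval_rotation by lra.
    destruct (rotate_on_cases al be u (val01 x))
      as [[A E]|[[A E]|[[A [B E]]|[A [B E]]]]];
    destruct i as [|[|[|[|i]]]]; simpl in *; lra || lia.
Qed.

Lemma stabilizer_orbit_contains_interval (x y : I01) :
  x <> y -> 0 < val01 y ->
  exists b, val01 y < b /\
    forall s, 0 < s < b - val01 y ->
      exists g, is_IET g /\ g x = x /\ val01 (g y) = val01 y + s.
Proof.
  intros Hxy Hy. pose proof (val01_range x); pose proof (val01_range y).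
  assert (Hne : val01 x <> val01 y) by (intros E; apply Hxy, val01_inj, E).
  assert (Hb : exists b, val01 y < b < 1 /\ (val01 x < val01 y \/ b <= val01 x)).
  { destruct (Rlt_dec (val01 x) (val01 y)).
    - exists ((val01 y + 1) / 2); lra.
    - exists ((val01 x + val01 y) / 2); lra. }
  destruct Hb as [b [Hb Hxb]].
  exists b; split; [lra|]. intros s Hs.
  exists (interval_rotation (val01 y) b s). split; [|split].
  - apply is_IET_interval_rotation; lra.
  - apply interval_rotation_fix; lra.
  - apply val_interval_rotation_shift; lra.
Qed.

Definition avoiding_third (v : R) (ab : R * R) : R * R :=
  let a := fst ab in let b := snd ab in let L := (b - a) / 3 in
  if Rle_dec a v then (if Rle_dec v (a + L) then (b - L, b) else (a, a + L))
  else (a, a + L).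

Lemma avoiding_third_spec v ab : fst ab < snd ab ->
  (fst ab <= fst (avoiding_third v ab) < snd (avoiding_third v ab)) /\
  snd (avoiding_third v ab) <= snd ab /\
  ~ (fst (avoiding_third v ab) <= v <= snd (avoiding_third v ab)).
Proof.
  intros H. unfold avoiding_third.
  destruct (Rle_dec (fst ab) v); [destruct (Rle_dec v (fst ab + (snd ab - fst ab) / 3))|];
    simpl; lra.
Qed.

Fixpoint nested_thirds (u : nat -> R) (a b : R) (n : nat) : R * R :=
  match n with
  | O => (a, b)
  | S k => avoiding_third (u k) (nested_thirds u a b k)
  end.

Section NestedThirds.

Variables (u : nat -> R) (a b : R).
Hypothesis a_lt_b : a < b.

Let lo n := fst (nested_thirds u a b n).
Let hi n := snd (nested_thirds u a b n).

Lemma nested_thirds_lt n : lo n < hi n.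
Proof.
  unfold lo, hi; induction n; simpl; [exact a_lt_b|].
  apply (avoiding_third_spec (u n) _ IHn).
Qed.

Lemma nested_thirds_step n :
  lo n <= lo (S n) /\ hi (S n) <= hi n /\ ~ (lo (S n) <= u n <= hi (S n)).
Proof.
  pose proof (avoiding_third_spec (u n) _ (nested_thirds_lt n)).
  unfold lo, hi; simpl; tauto.
Qed.

Lemma nested_thirds_lo_le_hi n m : lo n <= hi m.
Proof.
  assert (Hmono : forall k l, (k <= l)%nat -> lo k <= lo l /\ hi l <= hi k).
  { intros k l Hkl; induction Hkl; [lra|].
    pose proof (nested_thirds_step m0); lra. }
  pose proof (nested_thirds_lt (max n m)).
  destruct (Hmono n (max n m) ltac:(lia)), (Hmono m (max n m) ltac:(lia)); lra.
Qed.

Lemma exists_not_in_seq : exists x, a <= x <= b /\ forall n, u n <> x.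
Proof.
  set (E := fun y => exists k, y = lo k).
  assert (Hbound : bound E).
  { exists (hi 0%nat). intros y [k ->]. apply nested_thirds_lo_le_hi. }
  destruct (completeness E Hbound (ex_intro _ a (ex_intro _ 0%nat eq_refl)))
    as [x [Hub Hlub]].
  assert (Hlo : forall k, lo k <= x) by (intros k; apply Hub; exists k; auto).
  assert (Hhi : forall k, x <= hi k).
  { intros k. apply Hlub. intros y [j ->]. apply nested_thirds_lo_le_hi. }
  exists x. split.
  - exact (conj (Hlo 0%nat) (Hhi 0%nat)).
  - intros n Hn. destruct (nested_thirds_step n) as [_ [_ Hmiss]].
    apply Hmiss. rewrite Hn. exact (conj (Hlo (S n)) (Hhi (S n))).
Qed.

End NestedThirds.

Lemma stabilizer_orbit_enumerable (f : I01 -> I01) (x0 : I01) :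
  countable_index_centralizer f ->
  exists v : nat -> I01,
    forall g, is_IET g -> g x0 = x0 -> exists n, g (f x0) = v n.
Proof.
  intros [c [Hc Hcover]].
  assert (Hpre : forall n, exists y, c n y = x0).
  { intros n. destruct (Hc n) as [[d [_ Hd]] _]. exists (d x0). apply Hd. }
  destruct (functional_choice _ Hpre) as [y Hy].
  exists (fun n => c n (f (y n))).
  intros g Hg Hgx0. destruct (Hcover g Hg) as [n [k [[_ Hkf] Hgk]]].
  exists n. destruct (Hc n) as [[d [Hdc _]] _].
  assert (Hk : k x0 = y n).
  { rewrite <- (Hdc (k x0)), <- (Hdc (y n)), <- Hgk, Hgx0, Hy. reflexivity. }
  now rewrite Hgk, <- Hkf, Hk.
Qed.

(* The image must be nonzero so that the rotated interval [f x, b) starts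
   strictly inside [0,1). *)
Lemma exists_moved_point_image_neq0 (f : I01 -> I01) :
  (forall x y, f x = f y -> x = y) -> ~ (forall x, f x = x) ->
  exists x, f x <> x /\ val01 (f x) <> 0.
Proof.
  intros Hinj Hnid. destruct (not_all_ex_not _ _ Hnid) as [x0 Hx0].
  destruct (Req_dec (val01 (f x0)) 0) as [H0|H0]; [|now exists x0].
  exists (f x0); split.
  - intros E. apply Hx0, Hinj, E.
  - intros E. apply Hx0. rewrite (Hinj (f x0) x0); [reflexivity|].
    apply val01_inj; lra.
Qed.

Theorem corollary5p9 (f : I01 -> I01) :
  is_IET f -> ~ (forall x, f x = x) -> ~ countable_index_centralizer f.
Proof.
  intros [[finv [Hfinv _]] _] Hnid Hidx.
  assert (Hinj : forall x y, f x = f y -> x = y).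
  { intros x y E. now rewrite <- (Hfinv x), <- (Hfinv y), E. }
  destruct (exists_moved_point_image_neq0 f Hinj Hnid) as [x0 [Hmoved Hq]].
  pose proof (val01_range (f x0)).
  destruct (stabilizer_orbit_contains_interval x0 (f x0)) as [b [Hb Hrot]];
    [congruence | lra |].
  destruct (stabilizer_orbit_enumerable f x0 Hidx) as [v Hv].
  set (q := val01 (f x0)) in *.
  destruct (exists_not_in_seq (fun n => val01 (v n) - q) ((b - q) / 3) (2 * (b - q) / 3))
    as [s [Hs Hnot]]; [lra|].
  destruct (Hrot s) as [g [Hg [Hgx0 Hgq]]]; [lra|].
  destruct (Hv g Hg Hgx0) as [n Hn].
  apply (Hnot n). rewrite <- Hn, Hgq. ring.
Qed.
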